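(* Let $1<w\le 2$, $1<h\le 2$, $n\ge 2$, and $\frac12\le y_1<\dots<y_n\le h-\frac12$; put $\Delta y_i=y_{i+1}-y_i$. Consider the linear program in variables $g,\Delta x_1,\dots,\Delta x_{n-1}$: maximize $g$ subject to $\Delta x_i+\Delta y_i\ge g$ for $i=1,\dots,n-1$, $\sum_{i=1}^{n-1}\Delta x_i\le w-1$, and $\Delta x_i\ge 0$ for $i=1,\dots,n-1$. (1) If $\mathcal A$ is a reasonable layout of this instance with gap $\gamma$, then the linear program has a feasible solution with value $g\ge\gamma$. (2) Conversely, for every feasible solution of the linear program with value $g$ and every $\delta>0$, there exists a proper staircase $\mathcal A'$ of this instance with gap at least $g-\delta$.
   Context: The instance is the strip $T=[0,w]\times[0,h]$ with the given $y_i$. A layout is a pair $(\mathbf x,\prec)$ where $\mathbf x=(x_1,\dots,x_n)$ with $x_i\in[\frac12,w-\frac12]$, and $\prec$ is a total order (stacking order) on the squares $s_1,\dots,s_n$, where $s_i$ is the closed axis-parallel unit square with centre $(x_i,y_i)$. If $s_i\prec s_j$ we say $s_j$ is in front of $s_i$ and $s_i$ is behind $s_j$. A point $p$ on the boundary of $s_i$ is visible if every square $s_j$ ($j\neq i$) containing $p$ is behind $s_i$. The visible perimeter of $s_i$ is the total length of its visible boundary points; the gap of $s_i$ is its visible perimeter minus $2$, the gap of a layout is the minimum of the gaps of its squares, and a layout is reasonable if its gap is positive. A proper staircase is a layout with $x_1<x_2<\dots<x_n$ and $s_1\prec s_2\prec\dots\prec s_n$. *)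

From HB Require Import structures.
From mathcomp Require Import all_boot all_order all_algebra all_fingroup.
From mathcomp Require Import all_classical all_reals all_analysis.
Set Implicit Arguments. Unset Strict Implicit. Unset Printing Implicit Defensive.
Import Order.TTheory GRing.Theory Num.Theory.
Local Open Scope ring_scope.
Local Open Scope classical_set_scope.

(* Squares are indexed by 'I_n (paper's s_1..s_n become indices 0..n-1).
   A stacking order is represented by a permutation s : {perm 'I_n}:
   s_i is behind s_j iff (s i < s j)%N. *)

Definition in_square (R : realType) (cx cy : R) (p : R * R) : Prop :=
  `|p.1 - cx| <= 2^-1 /\ `|p.2 - cy| <= 2^-1.

Definition visible (R : realType) (n : nat) (y x : 'I_n -> R) (s : {perm 'I_n})
  (i : 'I_n) (p : R * R) : Prop :=
  forall j : 'I_n, j != i -> in_square (x j) (y j) p -> (s j < s i)%N.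

Definition edge_visible (R : realType) (n : nat) (y x : 'I_n -> R)
  (s : {perm 'I_n}) (i : 'I_n) (e : R -> R * R) : \bar R :=
  (@lebesgue_measure R) [set t : R | 0 <= t <= 1 /\ visible y x s i (e t)].

Definition visible_perimeter (R : realType) (n : nat) (y x : 'I_n -> R)
  (s : {perm 'I_n}) (i : 'I_n) : R :=
  let eb := fun t : R => (x i - 2^-1 + t, y i - 2^-1) in
  let et := fun t : R => (x i - 2^-1 + t, y i + 2^-1) in
  let el := fun t : R => (x i - 2^-1, y i - 2^-1 + t) in
  let er := fun t : R => (x i + 2^-1, y i - 2^-1 + t) in
  fine (edge_visible y x s i eb + edge_visible y x s i et +
        edge_visible y x s i el + edge_visible y x s i er)%E.

Definition sq_gap (R : realType) (n : nat) (y x : 'I_n -> R)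
  (s : {perm 'I_n}) (i : 'I_n) : R :=
  visible_perimeter y x s i - 2.

Definition layout_gap (R : realType) (n : nat) (y x : 'I_n -> R)
  (s : {perm 'I_n}) : \bar R :=
  \big[Order.min/+oo%E]_(i < n) (sq_gap y x s i)%:E.

Definition reasonable (R : realType) (n : nat) (y x : 'I_n -> R)
  (s : {perm 'I_n}) : Prop := (0 < layout_gap y x s)%E.

Definition is_layout (R : realType) (n : nat) (w : R) (x : 'I_n -> R) : Prop :=
  forall i : 'I_n, 2^-1 <= x i <= w - 2^-1.

Definition proper_staircase (R : realType) (n : nat) (x : 'I_n -> R)
  (s : {perm 'I_n}) : Prop :=
  forall i j : 'I_n, (i < j)%N -> x i < x j /\ (s i < s j)%N.

(* LP feasibility: dx i is Delta x_i (only indices i with a successor matter) *)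
Definition lp_feasible (R : realType) (n : nat) (y : 'I_n -> R) (w g : R)
  (dx : 'I_n -> R) : Prop :=
  (forall i j : 'I_n, val j = (val i).+1 -> g <= dx i + (y j - y i) /\ 0 <= dx i)
  /\ \sum_(i < n | ((val i).+1 < n)%N) dx i <= w - 1.

From HB Require Import structures.
From mathcomp Require Import all_boot all_order all_algebra all_fingroup.
From mathcomp Require Import all_classical all_reals all_analysis.
From mathcomp Require Import lra.
Set Implicit Arguments. Unset Strict Implicit. Unset Printing Implicit Defensive.
Import Order.TTheory GRing.Theory Num.Theory.
Local Open Scope ring_scope.

(* (1) If every square has gap at least gam, take Δx_i = max 0 (gam - Δy_i); only the
   budget Σ Δx_i <= w - 1 needs proof.  Insert the squares from front to back, keeping
   track of the sum of max 0 (gam - Δy) over the pairs of inserted squares that are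
   consecutive in y.  The square b inserted behind all previous ones has visible
   perimeter at least 2 + gam, and the inserted squares hide parts of its edges.  If b
   lies horizontally between two inserted squares, this forces b to be at vertical
   distance at least gam from every inserted square, so the sum does not grow; if b sticks
   out by d to one side, the edges of b that remain visible bound the growth of the sum
   by d.  So the sum never exceeds the horizontal extent of the centres, at most w - 1.
   (2) Perturb the LP solution so that every step is positive and stack the squares as a
   staircase with these horizontal steps, each in front of its predecessors: the bottom
   and left edges of s_i are fully visible, its top edge on length Δx_i and its right
   edge on length Δy_i, so its gap is at least Δx_i + Δy_i. *)

Section UnitIntervalMeasure.
Variable R : realType.
Local Open Scope classical_set_scope.
Local Notation mu := (@lebesgue_measure R).

Lemma lebesgue_measure_le (A B : set R) : A `<=` B -> (mu A <= mu B)%E.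
Proof.
move=> AB; rewrite /lebesgue_measure /lebesgue_stieltjes_measure /measure_extension.
exact: le_mu_ext.
Qed.

Lemma lebesgue_measure_le_itv (P : R -> Prop) (a b : R) :
  (forall t, 0 <= t <= 1 -> P t -> a <= t <= b) ->
  (mu [set t : R | (0 <= t <= 1)%R /\ P t] <= (Num.max 0 (b - a))%:E)%E.
Proof.
move=> sub; apply: le_trans (lebesgue_measure_le (B := `[a, b]) _) _.
  by move=> t [t01 Pt]; rewrite /= in_itv /= sub.
rewrite lebesgue_measure_itv /= lte_fin; case: ifP => _; rewrite lee_fin le_max lexx //.
by rewrite orbT.
Qed.

Lemma lebesgue_measure_ge_itv (P : R -> Prop) (a b : R) : a <= b ->
  (forall t, a <= t < b -> 0 <= t <= 1 /\ P t) ->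
  ((b - a)%:E <= mu [set t : R | (0 <= t <= 1)%R /\ P t])%E.
Proof.
move=> ab sup; apply: le_trans (lebesgue_measure_le (A := `[a, b[) _); last first.
  by move=> t; rewrite /= in_itv /=; exact: sup.
rewrite lebesgue_measure_itv /= lte_fin; case: ltP => // ba.
by rewrite (@le_anti _ _ a b) ?ab ?ba // subrr.
Qed.

End UnitIntervalMeasure.

Section Visibility.
Variables (R : realType) (n : nat) (y x : 'I_n -> R) (s : {perm 'I_n}).

Definition bottom_edge (i : 'I_n) (t : R) : R * R := (x i - 2^-1 + t, y i - 2^-1).
Definition top_edge (i : 'I_n) (t : R) : R * R := (x i - 2^-1 + t, y i + 2^-1).
Definition left_edge (i : 'I_n) (t : R) : R * R := (x i - 2^-1, y i - 2^-1 + t).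
Definition right_edge (i : 'I_n) (t : R) : R * R := (x i + 2^-1, y i - 2^-1 + t).

Definition visible_length (i : 'I_n) (e : R -> R * R) : R :=
  fine (edge_visible y x s i e).

Lemma edge_visibleE i e : edge_visible y x s i e = (visible_length i e)%:E.
Proof.
rewrite /visible_length fineK // ge0_fin_numE ?measure_ge0 //.
have := lebesgue_measure_le_itv (a := 0) (b := 1)
  (P := fun t => visible y x s i (e t)) (fun t t01 _ => t01).
by rewrite subr0 (max_r ler01) => /le_lt_trans; apply; exact: ltry.
Qed.

Lemma visible_length_le i e a b :
  (forall t, 0 <= t <= 1 -> visible y x s i (e t) -> a <= t <= b) ->
  visible_length i e <= Num.max 0 (b - a).
Proof. by move=> sub; rewrite -lee_fin -edge_visibleE; exact: lebesgue_measure_le_itv. Qed.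

Lemma visible_length_ge i e a b : a <= b ->
  (forall t, a <= t < b -> 0 <= t <= 1 /\ visible y x s i (e t)) ->
  b - a <= visible_length i e.
Proof. by move=> ab sup; rewrite -lee_fin -edge_visibleE; exact: lebesgue_measure_ge_itv. Qed.

Lemma visible_length_le1 i e : visible_length i e <= 1.
Proof.
have := visible_length_le (a := 0) (b := 1) (fun t t01 _ => t01).
by rewrite subr0 (max_r ler01).
Qed.

Lemma sq_gapE i :
  sq_gap y x s i = visible_length i (bottom_edge i) + visible_length i (top_edge i)
    + visible_length i (left_edge i) + visible_length i (right_edge i) - 2.
Proof. by rewrite /sq_gap /visible_perimeter /= !edge_visibleE. Qed.

Lemma visibleE i p :
  visible y x s i p <-> forall j, (s i < s j)%N -> ~ in_square (x j) (y j) p.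
Proof.
split=> [vis j sij pj | avoid j ji pj].
  have ji : j != i by apply: contraTneq sij => ->; rewrite ltnn.
  by have := vis j ji pj; rewrite ltnNge ltnW.
case: (ltngtP (s j) (s i)) => // [sij|/val_inj/perm_inj eji]; first by case: (avoid j sij pj).
by rewrite eji eqxx in ji.
Qed.

(* The parameter interval [o, o + 1] of the edge [e] of [s_i] is hidden, typically by a
   square in front of [s_i] meeting that edge. *)
Definition covered (i : 'I_n) (e : R -> R * R) (o : R) : Prop :=
  forall t, 0 <= t <= 1 -> visible y x s i (e t) -> t < o \/ o + 1 < t.

Lemma covered_length_le_opp i e o :
  covered i e o -> o <= 0 -> visible_length i e <= - o.
Proof.
move=> cov o0; apply: le_trans (visible_length_le (a := o + 1) (b := 1) _) _.
  by move=> t /andP[t0 t1] /(cov t); rewrite t0 t1 => /(_ isT) [|]; lra.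
by rewrite ge_max; apply/andP; split; lra.
Qed.

Lemma covered_length_le i e o :
  covered i e o -> 0 <= o -> visible_length i e <= o.
Proof.
move=> cov o0; apply: le_trans (visible_length_le (a := 0) (b := o) _) _.
  by move=> t /andP[t0 t1] /(cov t); rewrite t0 t1 => /(_ isT) [|]; lra.
by rewrite ge_max; apply/andP; split; lra.
Qed.

Lemma covered2_length_le0 i e o1 o2 :
  covered i e o1 -> covered i e o2 -> o1 <= 0 -> 0 <= o2 -> o2 <= o1 + 1 ->
  visible_length i e <= 0.
Proof.
move=> cov1 cov2 *; apply: le_trans (visible_length_le (a := o1 + 1) (b := o2) _) _.
  move=> t /andP[t0 t1] vis; have t01 : 0 <= t <= 1 by rewrite t0 t1.
  by case: (cov1 t t01 vis); case: (cov2 t t01 vis); lra.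
by rewrite ge_max; apply/andP; split; lra.
Qed.

Lemma covered_by_front i j e o : (s i < s j)%N ->
  (forall t, o <= t <= o + 1 -> in_square (x j) (y j) (e t)) -> covered i e o.
Proof.
move=> sij sq t _ vis; case: (ltP t o) => [|ot]; first by left.
case: (ltP (o + 1) t) => [|to]; first by right.
by case: ((visibleE i _).1 vis j sij (sq t _)); rewrite ot to.
Qed.

Lemma sq_gap_ge_staircase i ex ey : 0 < ex <= 1 -> 0 < ey <= 1 ->
  (forall j, (s i < s j)%N -> ex <= x j - x i /\ ey <= y j - y i) ->
  ex + ey <= sq_gap y x s i.
Proof.
move=> /andP[ex0 ex1] /andP[ey0 ey1] front.
have len_ge e b : 0 <= b <= 1 ->
    (forall t j, 0 <= t < b -> (s i < s j)%N -> ~ in_square (x j) (y j) (e t)) ->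
    b <= visible_length i e.
  move=> /andP[b0 b1] avoid; rewrite -[b](subr0 b); apply: visible_length_ge => // t tb.
  split; last by apply/visibleE => j; exact: avoid.
  by case/andP: tb => t0 tb; rewrite t0 ltW // (lt_le_trans tb).
have hb : 1 <= visible_length i (bottom_edge i).
  apply: len_ge; first by rewrite ler01 lexx.
  move=> t j _ /front[_ ?].
  by rewrite /in_square /= !ler_norml => -[_ /andP[? ?]]; lra.
have ht : ex <= visible_length i (top_edge i).
  apply: len_ge; first by rewrite ltW.
  move=> t j /andP[? ?] /front[? _].
  by rewrite /in_square /= !ler_norml => -[/andP[? ?] _]; lra.
have hl : 1 <= visible_length i (left_edge i).
  apply: len_ge; first by rewrite ler01 lexx.
  move=> t j _ /front[? _].
  by rewrite /in_square /= !ler_norml => -[/andP[? ?] _]; lra.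
have hr : ey <= visible_length i (right_edge i).
  apply: len_ge; first by rewrite ltW.
  move=> t j /andP[? ?] /front[_ ?].
  by rewrite /in_square /= !ler_norml => -[_ /andP[? ?]]; lra.
by rewrite sq_gapE; lra.
Qed.

Section CloseSquares.
Hypothesis x_close : forall a c, x a - x c <= 1.
Hypothesis y_close : forall a c, y a - y c <= 1.

Lemma front_covers_top i j : (s i < s j)%N -> y i <= y j ->
  covered i (top_edge i) (x j - x i).
Proof.
move=> sij yij; apply: covered_by_front sij _ => t /andP[? ?].
by have := y_close j i; rewrite /in_square /top_edge /= !ler_norml; lra.
Qed.

Lemma front_covers_bottom i j : (s i < s j)%N -> y j <= y i ->
  covered i (bottom_edge i) (x j - x i).
Proof.
move=> sij yij; apply: covered_by_front sij _ => t /andP[? ?].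
by have := y_close i j; rewrite /in_square /bottom_edge /= !ler_norml; lra.
Qed.

Lemma front_covers_left i j : (s i < s j)%N -> x j <= x i ->
  covered i (left_edge i) (y j - y i).
Proof.
move=> sij xij; apply: covered_by_front sij _ => t /andP[? ?].
by have := x_close i j; rewrite /in_square /left_edge /= !ler_norml; lra.
Qed.

Lemma front_covers_right i j : (s i < s j)%N -> x i <= x j ->
  covered i (right_edge i) (y j - y i).
Proof.
move=> sij xij; apply: covered_by_front sij _ => t /andP[? ?].
by have := x_close j i; rewrite /in_square /right_edge /= !ler_norml; lra.
Qed.

Section BackSquare.
Variables (i : 'I_n) (gam : R).
Hypothesis gam_le_gap : gam <= sq_gap y x s i.

Lemma gam_le_lengths b t l r :
  visible_length i (bottom_edge i) <= b -> visible_length i (top_edge i) <= t ->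
  visible_length i (left_edge i) <= l -> visible_length i (right_edge i) <= r ->
  gam <= b + t + l + r - 2.
Proof. by move: gam_le_gap; rewrite sq_gapE; lra. Qed.

Let len1 := visible_length_le1.

Lemma gam_le_rise_straddled j k : (s i < s j)%N -> (s i < s k)%N ->
  y i < y j -> y k != y i -> x j <= x i <= x k \/ x k <= x i <= x j ->
  gam <= y j - y i.
Proof.
move=> sj sk /ltW yij yki.
have xjk := x_close j k; have xkj := x_close k j; have yk1 := y_close i k.
case/orP: (lt_total yki) => /ltW yk [/andP[xji xik]|/andP[xki xij]].
- have hb := covered_length_le (front_covers_bottom sk yk) ltac:(lra).
  have ht := covered_length_le_opp (front_covers_top sj yij) ltac:(lra).
  have hl := covered_length_le (front_covers_left sj xji) ltac:(lra).
  have hr := covered_length_le_opp (front_covers_right sk xik) ltac:(lra).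
  have := gam_le_lengths hb ht hl hr; lra.
- have hb := covered_length_le_opp (front_covers_bottom sk yk) ltac:(lra).
  have ht := covered_length_le (front_covers_top sj yij) ltac:(lra).
  have hl := covered_length_le_opp (front_covers_left sk xki) ltac:(lra).
  have hr := covered_length_le (front_covers_right sj xij) ltac:(lra).
  have := gam_le_lengths hb ht hl hr; lra.
- have ht := covered2_length_le0 (front_covers_top sj yij) (front_covers_top sk yk)
    ltac:(lra) ltac:(lra) ltac:(lra).
  have hl := covered_length_le (front_covers_left sj xji) ltac:(lra).
  have := gam_le_lengths (len1 _ _) ht hl (len1 _ _); lra.
- have ht := covered2_length_le0 (front_covers_top sk yk) (front_covers_top sj yij)
    ltac:(lra) ltac:(lra) ltac:(lra).
  have hr := covered_length_le (front_covers_right sj xij) ltac:(lra).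
  have := gam_le_lengths (len1 _ _) ht (len1 _ _) hr; lra.
Qed.

Lemma gam_le_drop_straddled j k : (s i < s j)%N -> (s i < s k)%N ->
  y j < y i -> y k != y i -> x j <= x i <= x k \/ x k <= x i <= x j ->
  gam <= y i - y j.
Proof.
move=> sj sk /ltW yji yki.
have xjk := x_close j k; have xkj := x_close k j; have yk1 := y_close k i.
case/orP: (lt_total yki) => /ltW yk [/andP[xji xik]|/andP[xki xij]].
- have hb := covered2_length_le0 (front_covers_bottom sj yji) (front_covers_bottom sk yk)
    ltac:(lra) ltac:(lra) ltac:(lra).
  have hl := covered_length_le_opp (front_covers_left sj xji) ltac:(lra).
  have := gam_le_lengths hb (len1 _ _) hl (len1 _ _); lra.
- have hb := covered2_length_le0 (front_covers_bottom sk yk) (front_covers_bottom sj yji)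
    ltac:(lra) ltac:(lra) ltac:(lra).
  have hr := covered_length_le_opp (front_covers_right sj xij) ltac:(lra).
  have := gam_le_lengths hb (len1 _ _) (len1 _ _) hr; lra.
- have hb := covered_length_le_opp (front_covers_bottom sj yji) ltac:(lra).
  have ht := covered_length_le (front_covers_top sk yk) ltac:(lra).
  have hl := covered_length_le_opp (front_covers_left sj xji) ltac:(lra).
  have hr := covered_length_le (front_covers_right sk xik) ltac:(lra).
  have := gam_le_lengths hb ht hl hr; lra.
- have hb := covered_length_le (front_covers_bottom sj yji) ltac:(lra).
  have ht := covered_length_le_opp (front_covers_top sk yk) ltac:(lra).
  have hl := covered_length_le (front_covers_left sk xki) ltac:(lra).
  have hr := covered_length_le_opp (front_covers_right sj xij) ltac:(lra).
  have := gam_le_lengths hb ht hl hr; lra.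
Qed.

Lemma gam_le_right_below p j : (s i < s p)%N -> (s i < s j)%N ->
  y p < y i -> y j < y i -> x i <= x p -> x i <= x j ->
  gam <= (x j - x i) + (y i - y p).
Proof.
move=> sp sj /ltW ypi /ltW yji xip xij.
have hb := covered_length_le (front_covers_bottom sj yji) ltac:(lra).
have hr := covered_length_le_opp (front_covers_right sp xip) ltac:(lra).
have := gam_le_lengths hb (len1 _ _) (len1 _ _) hr; lra.
Qed.

Lemma gam_le_right_above p j : (s i < s p)%N -> (s i < s j)%N ->
  y i < y p -> y i < y j -> x i <= x p -> x i <= x j ->
  gam <= (x j - x i) + (y p - y i).
Proof.
move=> sp sj /ltW yip /ltW yij xip xij.
have ht := covered_length_le (front_covers_top sj yij) ltac:(lra).
have hr := covered_length_le (front_covers_right sp xip) ltac:(lra).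
have := gam_le_lengths (len1 _ _) ht (len1 _ _) hr; lra.
Qed.

Lemma gam_le_right_flanked p q j :
  (s i < s p)%N -> (s i < s q)%N -> (s i < s j)%N ->
  y p < y i -> y i < y q -> y j != y i -> x i <= x p -> x i <= x q -> x i <= x j ->
  gam <= x j - x i.
Proof.
move=> sp sq sj /ltW ypi /ltW yiq yji xip xiq xij.
have yqp := y_close q p.
have hr := covered2_length_le0 (front_covers_right sp xip) (front_covers_right sq xiq)
  ltac:(lra) ltac:(lra) ltac:(lra).
case/orP: (lt_total yji) => /ltW yj.
- have hb := covered_length_le (front_covers_bottom sj yj) ltac:(lra).
  have := gam_le_lengths hb (len1 _ _) (len1 _ _) hr; lra.
- have ht := covered_length_le (front_covers_top sj yj) ltac:(lra).
  have := gam_le_lengths (len1 _ _) ht (len1 _ _) hr; lra.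
Qed.

Lemma gam_le_left_below p j : (s i < s p)%N -> (s i < s j)%N ->
  y p < y i -> y j < y i -> x p <= x i -> x j <= x i ->
  gam <= (x i - x j) + (y i - y p).
Proof.
move=> sp sj /ltW ypi /ltW yji xpi xji.
have hb := covered_length_le_opp (front_covers_bottom sj yji) ltac:(lra).
have hl := covered_length_le_opp (front_covers_left sp xpi) ltac:(lra).
have := gam_le_lengths hb (len1 _ _) hl (len1 _ _); lra.
Qed.

Lemma gam_le_left_above p j : (s i < s p)%N -> (s i < s j)%N ->
  y i < y p -> y i < y j -> x p <= x i -> x j <= x i ->
  gam <= (x i - x j) + (y p - y i).
Proof.
move=> sp sj /ltW yip /ltW yij xpi xji.
have ht := covered_length_le_opp (front_covers_top sj yij) ltac:(lra).
have hl := covered_length_le (front_covers_left sp xpi) ltac:(lra).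
have := gam_le_lengths (len1 _ _) ht hl (len1 _ _); lra.
Qed.

Lemma gam_le_left_flanked p q j :
  (s i < s p)%N -> (s i < s q)%N -> (s i < s j)%N ->
  y p < y i -> y i < y q -> y j != y i -> x p <= x i -> x q <= x i -> x j <= x i ->
  gam <= x i - x j.
Proof.
move=> sp sq sj /ltW ypi /ltW yiq yji xpi xqi xji.
have yqp := y_close q p.
have hl := covered2_length_le0 (front_covers_left sp xpi) (front_covers_left sq xqi)
  ltac:(lra) ltac:(lra) ltac:(lra).
case/orP: (lt_total yji) => /ltW yj.
- have hb := covered_length_le_opp (front_covers_bottom sj yj) ltac:(lra).
  have := gam_le_lengths hb (len1 _ _) hl (len1 _ _); lra.
- have ht := covered_length_le_opp (front_covers_top sj yj) ltac:(lra).
  have := gam_le_lengths (len1 _ _) ht hl (len1 _ _); lra.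
Qed.

End BackSquare.
End CloseSquares.
End Visibility.

Lemma layout_gap_le_sq_gap (R : realType) n (y x : 'I_n -> R) (s : {perm 'I_n}) gam :
  layout_gap y x s = gam%:E -> forall i, gam <= sq_gap y x s i.
Proof. by move=> gapE i; rewrite -lee_fin -gapE; exact: bigmin_le. Qed.

Ltac case_max :=
  repeat match goal with |- context [Num.max ?u ?v] => case: (leP u v) => ? end.

Section Shortfall.
Variables (R : realFieldType) (n : nat) (gam : R) (y : 'I_n -> R).

Definition shortfall (i j : 'I_n) : R := Num.max 0 (gam - (y j - y i)).

(* When [y] is increasing, this is [shortfall i j] for the successor [j] of [i] in [Q]. *)
Definition next_shortfall (Q : {set 'I_n}) (i : 'I_n) : R :=
  \big[Num.max/0]_(j in Q | (i < j)%N) shortfall i j.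

Definition total_shortfall (Q : {set 'I_n}) : R := \sum_(i in Q) next_shortfall Q i.

Definition shortfall_raise (Q : {set 'I_n}) (b i : 'I_n) : R :=
  Num.max (shortfall i b) (next_shortfall Q i) - next_shortfall Q i.

Lemma shortfall_ge0 (i j : 'I_n) : 0 <= shortfall i j.
Proof. by rewrite le_max lexx. Qed.

Lemma shortfall_le (i j : 'I_n) c : gam - (y j - y i) <= c -> 0 <= c -> shortfall i j <= c.
Proof. by move=> h c0; rewrite ge_max c0 h. Qed.

Lemma shortfall_le_lower (i j k : 'I_n) : y j <= y k -> shortfall i k <= shortfall i j.
Proof. by move=> yjk; rewrite ge_max shortfall_ge0 le_max lerB ?lerB ?orbT. Qed.

Lemma next_shortfall_ge0 (Q : {set 'I_n}) (i : 'I_n) : 0 <= next_shortfall Q i.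
Proof. by apply: bigmax_ge_id. Qed.

Lemma shortfall_le_next (Q : {set 'I_n}) (i j : 'I_n) :
  j \in Q -> (i < j)%N -> shortfall i j <= next_shortfall Q i.
Proof. by move=> jQ ij; apply: le_bigmax_cond; rewrite jQ. Qed.

Lemma next_shortfall_le (Q : {set 'I_n}) (i : 'I_n) c : 0 <= c ->
  (forall j, j \in Q -> (i < j)%N -> shortfall i j <= c) -> next_shortfall Q i <= c.
Proof. by move=> c0 le_c; apply: bigmax_le => // j /andP[]; exact: le_c. Qed.

Lemma next_shortfall_setU1 (Q : {set 'I_n}) (b i : 'I_n) : b \notin Q ->
  next_shortfall (b |: Q) i =
  if (i < b)%N then Num.max (shortfall i b) (next_shortfall Q i) else next_shortfall Q i.
Proof.
move=> bQ; rewrite /next_shortfall; case: ifP => ib.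
  rewrite (bigD1 b) /=; last by rewrite setU11 ib.
  congr (Num.max _ _); apply: eq_bigl => j; rewrite in_setU1.
  by case: eqVneq => [->|] /=; rewrite ?(negbTE bQ) ?andbF ?andbT.
apply: eq_bigl => j; rewrite in_setU1.
by case: eqVneq => [->|] /=; rewrite ?ib ?(negbTE bQ) ?andbF.
Qed.

Lemma total_shortfall_setU1 (Q : {set 'I_n}) (b : 'I_n) : b \notin Q ->
  total_shortfall (b |: Q) = total_shortfall Q + next_shortfall Q b
    + \sum_(i in Q | (i < b)%N) shortfall_raise Q b i.
Proof.
move=> bQ; rewrite /total_shortfall big_setU1 //= next_shortfall_setU1 // ltnn.
rewrite addrC addrAC; congr (_ + _); rewrite big_mkcondr -big_split /=.
by apply: eq_bigr => i _; rewrite next_shortfall_setU1 //; case: ifP; rewrite ?addr0 // addrC subrK.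
Qed.

(* Convexity of [t |-> max 0 (gam - t)]. *)
Lemma shortfall_insert_le (p b q : 'I_n) : y p < y b -> y b < y q ->
  shortfall b q + (Num.max (shortfall p b) (shortfall p q) - shortfall p q)
  <= Num.max 0 gam.
Proof. by rewrite /shortfall => *; case_max; lra. Qed.

Lemma shortfall_raise_le (Q : {set 'I_n}) (b p : 'I_n) :
  shortfall_raise Q b p <= shortfall p b.
Proof.
have := next_shortfall_ge0 Q p; have := shortfall_ge0 p b.
by rewrite /shortfall_raise; case_max; lra.
Qed.

Lemma total_shortfall_set1 (r : 'I_n) : total_shortfall [set r]%SET = 0.
Proof.
rewrite /total_shortfall big_set1; apply/eqP; rewrite eq_le next_shortfall_ge0 andbT.
by apply: next_shortfall_le => // j; rewrite inE => /eqP ->; rewrite ltnn.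
Qed.

Lemma total_shortfall_setU1_separated (Q : {set 'I_n}) (b : 'I_n) : b \notin Q ->
  (forall j, j \in Q -> (b < j)%N -> gam <= y j - y b) ->
  (forall j, j \in Q -> (j < b)%N -> gam <= y b - y j) ->
  total_shortfall (b |: Q) <= total_shortfall Q.
Proof.
move=> bQ above below; rewrite total_shortfall_setU1 // -addrA gerDl.
rewrite big1 => [|i /andP[iQ ib]].
  rewrite addr0; apply: next_shortfall_le => // j jQ bj.
  by apply: shortfall_le => //; have := above j jQ bj; lra.
rewrite /shortfall_raise max_r ?subrr //; apply: le_trans (next_shortfall_ge0 Q i).
by apply: shortfall_le => //; have := below i iQ ib; lra.
Qed.

Hypothesis y_increasing : forall i j : 'I_n, (i < j)%N -> y i < y j.

Lemma y_nondecreasing (i j : 'I_n) : (i <= j)%N -> y i <= y j.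
Proof.
by rewrite leq_eqVlt => /orP[/eqP/val_inj ->|/y_increasing/ltW].
Qed.

Lemma next_shortfall_nearest (Q : {set 'I_n}) (b q : 'I_n) : q \in Q -> (b < q)%N ->
  (forall j, j \in Q -> (b < j)%N -> (q <= j)%N) -> next_shortfall Q b <= shortfall b q.
Proof.
move=> qQ bq qmin; apply: next_shortfall_le (shortfall_ge0 _ _) _ => j jQ bj.
exact/shortfall_le_lower/y_nondecreasing/qmin.
Qed.

Lemma raise_sum_nearest (Q : {set 'I_n}) (b p : 'I_n) : p \in Q -> (p < b)%N ->
  (forall i, i \in Q -> (i < b)%N -> (i <= p)%N) ->
  \sum_(i in Q | (i < b)%N) shortfall_raise Q b i = shortfall_raise Q b p.
Proof.
move=> pQ pb pmax; rewrite (bigD1 p) /=; last by rewrite pQ pb.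
rewrite big1 ?addr0 // => i /andP[/andP[iQ ib] ip].
have {ip}ip : (i < p)%N by rewrite ltn_neqAle pmax // andbT.
rewrite /shortfall_raise max_r ?subrr //.
apply: le_trans (shortfall_le_next pQ ip).
exact/shortfall_le_lower/ltW/y_increasing.
Qed.

Lemma shortfall_increment_flanked (Q : {set 'I_n}) (b p q : 'I_n) :
  p \in Q -> q \in Q -> (p < b)%N -> (b < q)%N ->
  (forall i, i \in Q -> (i < b)%N -> (i <= p)%N) ->
  (forall j, j \in Q -> (b < j)%N -> (q <= j)%N) ->
  next_shortfall Q b + \sum_(i in Q | (i < b)%N) shortfall_raise Q b i <= Num.max 0 gam.
Proof.
move=> pQ qQ pb bq pmax qmin; rewrite (raise_sum_nearest pQ pb pmax).
have := next_shortfall_nearest qQ bq qmin.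
have := shortfall_le_next qQ (ltn_trans pb bq).
have := shortfall_insert_le (y_increasing pb) (y_increasing bq).
by rewrite /shortfall_raise; case_max; lra.
Qed.

Lemma total_shortfall_setU1_le (Q : {set 'I_n}) (b : 'I_n) (m : R) :
  b \notin Q -> 0 <= m ->
  ((forall j, j \in Q -> (b < j)%N) -> forall q, q \in Q -> gam <= m + (y q - y b)) ->
  ((forall j, j \in Q -> (j < b)%N) -> forall p, p \in Q -> gam <= m + (y b - y p)) ->
  (forall p q, p \in Q -> q \in Q -> (p < b)%N -> (b < q)%N -> gam <= m) ->
  total_shortfall (b |: Q) <= total_shortfall Q + m.
Proof.
move=> bQ m0 above below flanked; rewrite total_shortfall_setU1 // -addrA lerD2l.
have sides j : j \in Q -> (j < b)%N || (b < j)%N.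
  by move=> jQ; rewrite -neq_ltn; apply: contraNneq bQ => /val_inj <-.
case: (pickP (fun j => (j \in Q) && (j < b)%N)) => [p0 p0P|nobelow]; last first.
  have allabove j : j \in Q -> (b < j)%N.
    by move=> jQ; move: (nobelow j) (sides j jQ); rewrite jQ /= => ->.
  rewrite big_pred0 ?addr0 => [|i]; last by apply: negbTE; rewrite nobelow.
  apply: (next_shortfall_le m0) => j jQ _; apply: (shortfall_le _ m0).
  by have := above allabove j jQ; lra.
case: (@arg_maxnP _ p0 (fun j => (j \in Q) && (j < b)%N) val p0P) => p /andP[pQ pb] pmax.
have {}pmax i : i \in Q -> (i < b)%N -> (i <= p)%N by move=> iQ ib; apply: pmax; rewrite iQ.
case: (pickP (fun j => (j \in Q) && (b < j)%N)) => [q0 q0P|noabove].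
  case: (@arg_minnP _ q0 (fun j => (j \in Q) && (b < j)%N) val q0P) => q /andP[qQ bq] qmin.
  apply: le_trans (shortfall_increment_flanked pQ qQ pb bq pmax _) _.
    by move=> j jQ bj; apply: qmin; rewrite jQ.
  by rewrite ge_max m0 (flanked p q).
have allbelow j : j \in Q -> (j < b)%N.
  by move=> jQ; move: (noabove j) (sides j jQ); rewrite jQ /= => -> /orP[].
rewrite (raise_sum_nearest pQ pb pmax).
have : next_shortfall Q b <= 0.
  by apply: next_shortfall_le => // j /allbelow/ltnW; rewrite leqNgt => /negbTE ->.
have : shortfall p b <= m.
  by apply: (shortfall_le _ m0); have := below allbelow p pQ; lra.
by have := shortfall_raise_le Q b p; lra.
Qed.

End Shortfall.
Section Extent.
Variables (R : realDomainType) (n : nat) (x : 'I_n -> R) (r : 'I_n).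

(* [x r] is only a default value: [r] lies in every set considered below. *)
Definition xmax (Q : {set 'I_n}) : R := \big[Num.max/x r]_(i in Q) x i.
Definition xmin (Q : {set 'I_n}) : R := \big[Num.min/x r]_(i in Q) x i.

Lemma big_selective_attained (op : R -> R -> R) (Q : {set 'I_n}) :
  (forall a b, op a b = a \/ op a b = b) -> r \in Q ->
  exists2 j, j \in Q & \big[op/x r]_(i in Q) x i = x j.
Proof.
move=> sel rQ; elim/big_ind: _ => [|_ _ [j jQ ->] [k kQ ->]|j jQ]; last 1 first.
- by exists j.
- by exists r.
- by case: (sel (x j) (x k)) => ->; [exists j|exists k].
Qed.

Lemma xmax_attained (Q : {set 'I_n}) : r \in Q -> exists2 j, j \in Q & xmax Q = x j.
Proof. by apply: big_selective_attained => a b; case: leP; [right|left]. Qed.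

Lemma xmin_attained (Q : {set 'I_n}) : r \in Q -> exists2 j, j \in Q & xmin Q = x j.
Proof. by apply: big_selective_attained => a b; case: leP; [left|right]. Qed.

Lemma le_xmax (Q : {set 'I_n}) i : i \in Q -> x i <= xmax Q.
Proof. by move=> iQ; apply: le_bigmax_cond. Qed.

Lemma xmin_le (Q : {set 'I_n}) i : i \in Q -> xmin Q <= x i.
Proof. by move=> iQ; apply: bigmin_le_cond. Qed.

Lemma xmax_setU1 (Q : {set 'I_n}) b : b \notin Q -> xmax (b |: Q) = Num.max (x b) (xmax Q).
Proof.
move=> bQ; rewrite /xmax (bigD1 b) ?setU11 //=; congr (Num.max _ _).
apply: eq_bigl => j; rewrite in_setU1.
by case: (eqVneq j b) => [->|_]; rewrite ?(negbTE bQ) ?andbF ?andbT.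
Qed.

Lemma xmin_setU1 (Q : {set 'I_n}) b : b \notin Q -> xmin (b |: Q) = Num.min (x b) (xmin Q).
Proof.
move=> bQ; rewrite /xmin (bigD1 b) ?setU11 //=; congr (Num.min _ _).
apply: eq_bigl => j; rewrite in_setU1.
by case: (eqVneq j b) => [->|_]; rewrite ?(negbTE bQ) ?andbF ?andbT.
Qed.

End Extent.

Section AddBackSquare.
Variables (R : realType) (n : nat) (y x : 'I_n -> R) (s : {perm 'I_n}) (gam : R).
Hypothesis x_close : forall a c, x a - x c <= 1.
Hypothesis y_close : forall a c, y a - y c <= 1.
Hypothesis y_increasing : forall i j : 'I_n, (i < j)%N -> y i < y j.
Variables (Q : {set 'I_n}) (b : 'I_n).
Hypothesis bQ : b \notin Q.
Hypothesis gam_le_gap : gam <= sq_gap y x s b.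
Hypothesis behind : forall j, j \in Q -> (s b < s j)%N.

Let y_neq j : j \in Q -> y j != y b.
Proof.
move=> jQ; case: (ltngtP j b) => [/y_increasing/lt_eqF->|/y_increasing/gt_eqF->|] //.
by move=> /val_inj jb; move: bQ; rewrite -jb jQ.
Qed.

Lemma total_shortfall_setU1_straddled j k : j \in Q -> k \in Q ->
  x j <= x b <= x k -> total_shortfall gam y (b |: Q) <= total_shortfall gam y Q.
Proof.
move=> jQ kQ /andP[xjb xbk].
have partner i :
    exists2 c, c \in Q & x i <= x b <= x c \/ x c <= x b <= x i.
  case: (lerP (x i) (x b)) => xi; [exists k => //; left|exists j => //; right].
  - by rewrite xbk.
  - by rewrite xjb ltW.
apply: total_shortfall_setU1_separated => // i iQ /y_increasing yi;
  have [c cQ xc] := partner i.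
- exact: (gam_le_rise_straddled x_close y_close gam_le_gap (behind iQ) (behind cQ) yi (y_neq cQ)).
- exact: (gam_le_drop_straddled x_close y_close gam_le_gap (behind iQ) (behind cQ) yi (y_neq cQ)).
Qed.

Lemma total_shortfall_setU1_left j0 : j0 \in Q -> (forall j, j \in Q -> x j <= x b) ->
  total_shortfall gam y (b |: Q) <= total_shortfall gam y Q + (x b - x j0).
Proof.
move=> j0Q left; apply: total_shortfall_setU1_le; rewrite ?subr_ge0 ?left //.
- move=> above q qQ; have := gam_le_left_above x_close y_close gam_le_gap (behind qQ)
    (behind j0Q) (y_increasing (above q qQ)) (y_increasing (above j0 j0Q)) (left q qQ)
    (left j0 j0Q); lra.
- move=> below p pQ; have := gam_le_left_below x_close y_close gam_le_gap (behind pQ)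
    (behind j0Q) (y_increasing (below p pQ)) (y_increasing (below j0 j0Q)) (left p pQ)
    (left j0 j0Q); lra.
- move=> p q pQ qQ pb bq; exact: (gam_le_left_flanked x_close y_close gam_le_gap (behind pQ)
    (behind qQ) (behind j0Q) (y_increasing pb) (y_increasing bq) (y_neq j0Q) (left p pQ)
    (left q qQ) (left j0 j0Q)).
Qed.

Lemma total_shortfall_setU1_right j0 : j0 \in Q -> (forall j, j \in Q -> x b <= x j) ->
  total_shortfall gam y (b |: Q) <= total_shortfall gam y Q + (x j0 - x b).
Proof.
move=> j0Q right; apply: total_shortfall_setU1_le; rewrite ?subr_ge0 ?right //.
- move=> above q qQ; have := gam_le_right_above x_close y_close gam_le_gap (behind qQ)
    (behind j0Q) (y_increasing (above q qQ)) (y_increasing (above j0 j0Q)) (right q qQ)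
    (right j0 j0Q); lra.
- move=> below p pQ; have := gam_le_right_below x_close y_close gam_le_gap (behind pQ)
    (behind j0Q) (y_increasing (below p pQ)) (y_increasing (below j0 j0Q)) (right p pQ)
    (right j0 j0Q); lra.
- move=> p q pQ qQ pb bq; exact: (gam_le_right_flanked x_close y_close gam_le_gap (behind pQ)
    (behind qQ) (behind j0Q) (y_increasing pb) (y_increasing bq) (y_neq j0Q) (right p pQ)
    (right q qQ) (right j0 j0Q)).
Qed.

Lemma total_shortfall_setU1_le_span r : r \in Q ->
  total_shortfall gam y (b |: Q) - total_shortfall gam y Q
  <= (xmax x r (b |: Q) - xmin x r (b |: Q)) - (xmax x r Q - xmin x r Q).
Proof.
move=> rQ; rewrite xmax_setU1 // xmin_setU1 //.
have [j jQ xmaxE] := xmax_attained x rQ; have [k kQ xminE] := xmin_attained x rQ.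
have xmin_le_xmax : xmin x r Q <= xmax x r Q by rewrite xminE le_xmax.
case: (leP (x b) (xmax x r Q)) => [bmax|maxb]; case: (leP (xmin x r Q) (x b)) => [minb|bmin].
- have := total_shortfall_setU1_straddled kQ jQ; rewrite -xminE -xmaxE minb bmax; lra.
- have := total_shortfall_setU1_right kQ; rewrite -xminE.
  by move=> /(_ (fun j jQ => le_trans (ltW bmin) (xmin_le x r jQ))); lra.
- have := total_shortfall_setU1_left jQ; rewrite -xmaxE.
  by move=> /(_ (fun j jQ => le_trans (le_xmax x r jQ) (ltW maxb))); lra.
- lra.
Qed.

End AddBackSquare.

Definition front_part n (s : {perm 'I_n}) (k : nat) : {set 'I_n} := [set i | (k <= s i)%N].

Lemma front_part_rank n (s : {perm 'I_n}) (b : 'I_n) :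
  front_part s (s b) = b |: front_part s (s b).+1.
Proof.
apply/setP => i; rewrite !inE leq_eqVlt; congr (_ || _).
by rewrite (inj_eq val_inj) (inj_eq perm_inj) eq_sym.
Qed.

Section FrontToBack.
Variables (R : realType) (n : nat) (y x : 'I_n -> R) (s : {perm 'I_n}) (gam : R).
Hypothesis x_close : forall a c, x a - x c <= 1.
Hypothesis y_close : forall a c, y a - y c <= 1.
Hypothesis y_increasing : forall i j : 'I_n, (i < j)%N -> y i < y j.
Hypothesis gam_le_gap : forall i, gam <= sq_gap y x s i.
Variable r : 'I_n.
Hypothesis r_front : forall i, (s i <= s r)%N.

Lemma front_part_top : front_part s (s r) = [set r]%SET.
Proof.
apply/setP => i; rewrite !inE; apply/idP/eqP => [ri|-> //].
by apply: (@perm_inj _ s); apply/val_inj/eqP; rewrite eqn_leq ri r_front.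
Qed.

Lemma total_shortfall_front_part k : (k <= s r)%N ->
  total_shortfall gam y (front_part s k)
  <= xmax x r (front_part s k) - xmin x r (front_part s k).
Proof.
move=> kr; rewrite -(subKn kr); elim: (s r - k)%N (leq_subr k (s r)) => [|d IH] dr.
  rewrite subn0 front_part_top total_shortfall_set1 subr_ge0.
  by apply: le_trans (xmin_le x r (set11 r)) (le_xmax x r (set11 r)).
have rank_lt : (s r - d.+1 < n)%N by rewrite (leq_ltn_trans (leq_subr _ _)).
set b := (s^-1)%g (Ordinal rank_lt).
have sb : (s r - d.+1)%N = s b by rewrite /b permKV.
have rQ : r \in front_part s (s b).+1.
  by rewrite inE -sb subnSK // leq_subr.
have behind j : j \in front_part s (s b).+1 -> (s b < s j)%N by rewrite inE.
have bQ : b \notin front_part s (s b).+1 by rewrite inE ltnn.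
have := total_shortfall_setU1_le_span x_close y_close y_increasing bQ (gam_le_gap b) behind rQ.
rewrite -front_part_rank sb.
by have := IH (ltnW dr); rewrite -subnSK // sb; lra.
Qed.

End FrontToBack.

Lemma lp_feasible_of_layout (R : realType) (w : R) n (y x : 'I_n -> R) (s : {perm 'I_n})
    (gam : R) :
  (0 < n)%N -> w <= 2 -> is_layout w x -> (forall a c, y a - y c <= 1) ->
  (forall i j : 'I_n, (i < j)%N -> y i < y j) ->
  layout_gap y x s = gam%:E -> lp_feasible y w gam (next_shortfall gam y [set: 'I_n]).
Proof.
move=> n0 w2 lay y_close y_increasing /layout_gap_le_sq_gap gam_le_gap.
have x_close a c : x a - x c <= 1 by move: (lay a) (lay c) => /andP[? ?] /andP[? ?]; lra.
have inT i : i \in [set: 'I_n] by rewrite inE.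
split=> [i j ji|].
  have ij : (i < j)%N by rewrite ji.
  split; last exact: next_shortfall_ge0.
  have := shortfall_le_next gam y (inT j) ij.
  by rewrite /shortfall; case_max; lra.
case: (arg_maxnP (fun i => val (s i)) (erefl true : predT (Ordinal n0))) => r _ r_front.
have := total_shortfall_front_part x_close y_close y_increasing gam_le_gap
  (fun i => r_front i isT) (leq0n (s r)).
have -> : front_part s 0 = [set: 'I_n] by apply/setP => i; rewrite !inE.
have [j _ ->] := xmax_attained x (inT r); have [k _ ->] := xmin_attained x (inT r).
move: (lay j) (lay k) => /andP[_ ?] /andP[? _] le_span.
apply: le_trans (le_trans le_span _); last lra.
rewrite /total_shortfall big_mkcond [X in _ <= X](eq_bigl predT) => [|i]; last exact: inT.
by apply: ler_sum => i _; case: ifP => // _; exact: next_shortfall_ge0.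
Qed.

Lemma lp_feasible_le (R : realType) n (y : 'I_n -> R) (w g : R) (dx : 'I_n -> R) (k : 'I_n) :
  lp_feasible y w g dx -> (k.+1 < n)%N -> 0 <= dx k <= w - 1.
Proof.
move=> [step sum_le] kn; have dx0 (i : 'I_n) : (i.+1 < n)%N -> 0 <= dx i.
  by move=> iP; have [] := step i (Ordinal iP) erefl.
rewrite dx0 //=; apply: le_trans sum_le; rewrite (bigD1 k) //= lerDl.
by apply: sumr_ge0 => i /andP[iP _]; exact: dx0.
Qed.

(* Mixing in a small uniform step keeps the budget and makes every step positive, as a
   proper staircase requires. *)
Lemma lp_feasible_perturb (R : realType) n (y : 'I_n -> R) (w g : R) (dx : 'I_n -> R)
    (delta : R) :
  (0 < n)%N -> 1 < w <= 2 -> 0 < delta -> lp_feasible y w g dx ->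
  exists e : 'I_n -> R, [/\ forall k, 0 <= e k, \sum_k e k <= w - 1 &
    forall k : 'I_n, (k.+1 < n)%N -> 0 < e k /\ dx k - delta <= e k].
Proof.
move=> n0 /andP[w1 w2] d0 feas.
have [c c0 sum_c] : exists2 c : R, 0 < c & \sum_(k < n | ((val k).+1 < n)%N) c <= w - 1.
  exists ((w - 1) / n%:R); first by rewrite divr_gt0 ?ltr0n // subr_gt0.
  apply: le_trans (_ : \sum_(k < n) (w - 1) / n%:R <= _).
    rewrite [X in _ <= X](bigID (fun k : 'I_n => ((val k).+1 < n)%N)) lerDl.
    by apply: sumr_ge0 => *; rewrite divr_ge0 ?ler0n // subr_ge0 ltW.
  by rewrite sumr_const card_ord -[X in X <= _]mulr_natr divfK // pnatr_eq0 -lt0n.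
pose th := 2^-1 * Num.min delta 1.
have th0 : 0 < th by rewrite mulr_gt0 // lt_min d0 ltr01.
have [th_delta th_half] : th < delta /\ th <= 2^-1.
  rewrite /th; have := ge_min delta delta 1; have := ge_min 1 delta 1.
  by rewrite !lexx orbT /=; lra.
exists (fun k : 'I_n => if ((val k).+1 < n)%N then (1 - th) * dx k + th * c else 0); split.
- move=> k; case: ifP => // /(lp_feasible_le feas) /andP[? _].
  by apply: addr_ge0; apply: mulr_ge0; lra.
- rewrite -big_mkcond /= big_split /= -!mulr_sumr.
  have [_ sum_dx] := feas; have th1 : 0 <= 1 - th by lra.
  have := ler_wpM2l th1 sum_dx; have := ler_wpM2l (ltW th0) sum_c; lra.
- move=> k kn; rewrite kn; have /andP[? ?] := lp_feasible_le feas kn.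
  have : th * dx k <= th * 1 by apply: ler_wpM2l; lra.
  have : 0 < th * c by exact: mulr_gt0.
  have : 0 <= (1 - th) * dx k by apply: mulr_ge0; lra.
  by split; lra.
Qed.

Section Staircase.
Variables (R : realType) (n : nat) (e : 'I_n -> R).
Hypothesis e_ge0 : forall k, 0 <= e k.

Definition staircase (i : 'I_n) : R := 2^-1 + \sum_(k < n | (k < i)%N) e k.

Lemma staircase_step (i j : 'I_n) : (i < j)%N -> e i <= staircase j - staircase i.
Proof.
move=> ij; rewrite /staircase opprD addrACA subrr add0r.
rewrite (bigID (fun k : 'I_n => (k < i)%N)) /= addrAC.
have -> : \sum_(k < n | (k < j)%N && (k < i)%N) e k = \sum_(k < n | (k < i)%N) e k.
  by apply: eq_bigl => k; case: (ltnP k i) => ki; rewrite ?andbF ?andbT // (ltn_trans ki ij).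
rewrite subrr add0r (bigD1 i) /= ?ij ?ltnn // lerDl.
by apply: sumr_ge0.
Qed.

Lemma staircase_layout (w : R) : \sum_k e k <= w - 1 -> is_layout w staircase.
Proof.
move=> sum_e i; rewrite /staircase; apply/andP; split.
  by rewrite lerDl sumr_ge0.
suff : \sum_(k < n | (k < i)%N) e k <= \sum_k e k by lra.
by rewrite [X in _ <= X](bigID (fun k : 'I_n => (k < i)%N)) lerDl sumr_ge0.
Qed.

End Staircase.

Lemma proper_staircase_of_lp (R : realType) (w : R) n (y : 'I_n -> R) (g delta : R)
    (dx : 'I_n -> R) :
  (1 < n)%N -> 1 < w <= 2 -> (forall a c, y a - y c <= 1) ->
  (forall i j : 'I_n, (i < j)%N -> y i < y j) ->
  lp_feasible y w g dx -> 0 < delta ->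
  exists (x : 'I_n -> R) (s : {perm 'I_n}),
    [/\ is_layout w x, proper_staircase x s & ((g - delta)%:E <= layout_gap y x s)%E].
Proof.
move=> n1 w12 y_close y_increasing feas d0; have n0 := ltnW n1.
have [e [e_ge0 sum_e e_step]] := lp_feasible_perturb n0 w12 d0 feas.
have e_le1 k : e k <= 1.
  apply: le_trans (_ : \sum_k e k <= 1); last by case/andP: w12 => *; lra.
  by rewrite (bigD1 k) //= lerDl sumr_ge0.
have gap_ge i : g - delta <= sq_gap y (staircase e) 1%g i.
  case: (ltnP i.+1 n) => [iP|i_last].
    pose j1 := Ordinal iP; have [g_le _] := feas.1 i j1 erefl.
    have [e_pos e_ge] := e_step i iP.
    apply: le_trans (sq_gap_ge_staircase (ex := e i) (ey := y j1 - y i) _ _ _).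
    - by have := y_close j1 i; lra.
    - by rewrite e_pos e_le1.
    - by rewrite subr_gt0 y_increasing //= ltnSn y_close.
    move=> j; rewrite !perm1 => ij; split; first exact: staircase_step.
    by rewrite lerD2r; apply: y_nondecreasing.
  pose o0 := Ordinal n0; pose o1 := Ordinal n1.
  have [g_le _] := feas.1 o0 o1 erefl.
  have /andP[_ dx_le] := lp_feasible_le (k := o0) feas n1.
  apply: le_trans (sq_gap_ge_staircase (ex := 1) (ey := 1) _ _ _); rewrite ?ltr01 ?lexx //.
  - by have := y_close o1 o0; case/andP: w12 => *; lra.
  - by move=> j; rewrite !perm1 => ij; have := leq_trans i_last ij; rewrite leqNgt ltn_ord.
exists (staircase e), 1%g; split; first exact: staircase_layout.
  move=> i j ij; rewrite !perm1; split => //.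
  have [e_pos _] := e_step i (leq_ltn_trans ij (ltn_ord j)).
  by have := staircase_step e_ge0 ij; lra.
by apply: le_bigmin => [|i _]; rewrite ?leey ?lee_fin.
Qed.

Unset Implicit Arguments.

Theorem lemma6 (R : realType) (w h : R) (n : nat) (y : 'I_n -> R) :
  1 < w <= 2 -> 1 < h <= 2 -> (2 <= n)%N ->
  (forall i : 'I_n, 2^-1 <= y i <= h - 2^-1) ->
  (forall i j : 'I_n, (i < j)%N -> y i < y j) ->
  (forall (x : 'I_n -> R) (s : {perm 'I_n}) (gam : R),
     is_layout w x -> reasonable y x s -> layout_gap y x s = gam%:E ->
     exists (g : R) (dx : 'I_n -> R), lp_feasible y w g dx /\ gam <= g) /\
  (forall (g : R) (dx : 'I_n -> R), lp_feasible y w g dx ->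
     forall delta : R, 0 < delta ->
     exists (x : 'I_n -> R) (s : {perm 'I_n}),
       [/\ is_layout w x, proper_staircase x s &
           ((g - delta)%:E <= layout_gap y x s)%E]).
Proof.
move=> w12 /andP[_ h2] n2 y_in y_increasing.
have y_close a c : y a - y c <= 1.
  by move: (y_in a) (y_in c) => /andP[? ?] /andP[? ?]; lra.
(* Part (1) does not need the layout to be reasonable. *)
split=> [x s gam lay _ gapE | g dx feas delta d0].
  exists gam, (next_shortfall gam y [set: 'I_n]); split => //.
  case/andP: w12 => _ w2.
  exact: lp_feasible_of_layout (ltnW n2) w2 lay y_close y_increasing gapE.
exact: proper_staircase_of_lp n2 w12 y_close y_increasing feas d0.
Qed.
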